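(* Let $\alpha,\beta\in\mathbb{R}$ with $\beta-\alpha-2\neq 0$, and set $\mathbf C_{\alpha,\beta}=\frac{(\beta-3)(2\alpha-\beta+1)}{4}$. For every $f\in C_0^\infty((0,\infty))$ (complex-valued), with $f^\#(r)=f''(r)+\frac{\beta-2}{r}f'(r)+\frac{(\beta-3)^2}{4r^2}f(r)$, there holds \[ \mathbf C_{\alpha,\beta}^2\left\|\frac{f}{r^2}\right\|_{L^2_\beta}^2=\left\|\mathfrak L_\alpha f\right\|_{L^2_\beta}^2-\left(1+\frac{2\mathbf C_{\alpha,\beta}}{(\beta-\alpha-2)^2}\right)\left\|\mathfrak L_\alpha f+\mathbf C_{\alpha,\beta}\frac{f}{r^2}\right\|_{L^2_\beta}^2+\frac{2\mathbf C_{\alpha,\beta}}{(\beta-\alpha-2)^2}\left\|f^\#\right\|_{L^2_\beta}^2 . \]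
   Context: For $\beta\in\mathbb{R}$, $L^2_\beta$ denotes the weighted space on $(0,\infty)$ with norm $\|g\|_{L^2_\beta}^2=\int_0^\infty |g(r)|^2 r^\beta\,dr$. For $\alpha\in\mathbb{R}$, $\mathfrak L_\alpha$ is the operator $\mathfrak L_\alpha f(r)=f''(r)+\frac{\alpha}{r}f'(r)$. Expressions such as $f/r^2$ denote the function $r\mapsto f(r)/r^2$. *)

From Stdlib Require Import Reals.
From Coquelicot Require Import Coquelicot.
Open Scope R_scope.

(* A complex-valued function f : (0,oo) -> C is represented by its real and
   imaginary parts (u, v), f = u + i v. *)

Definition smooth_pos (u : R -> R) : Prop :=
  forall (n : nat) (r : R), 0 < r -> ex_derive (Derive_n u n) r.

Definition compact_support_pos (u : R -> R) : Prop :=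
  exists a b : R, 0 < a /\ a < b /\
    forall r : R, 0 < r -> (r < a \/ b < r) -> u r = 0.

Definition Cc_inf_pos (u v : R -> R) : Prop :=
  smooth_pos u /\ compact_support_pos u /\ smooth_pos v /\ compact_support_pos v.

Definition L2sq (beta : R) (g1 g2 : R -> R) : R :=
  RInt_gen (fun r => (g1 r ^ 2 + g2 r ^ 2) * Rpower r beta)
           (at_right 0) (Rbar_locally p_infty).

Definition Lop (alpha : R) (u : R -> R) : R -> R :=
  fun r => Derive_n u 2 r + alpha / r * Derive u r.

Definition sharp (beta : R) (u : R -> R) : R -> R :=
  fun r => Derive_n u 2 r + (beta - 2) / r * Derive u r
           + (beta - 3) ^ 2 / (4 * r ^ 2) * u r.

Definition Cab (alpha beta : R) : R := (beta - 3) * (2 * alpha - beta + 1) / 4.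

From Stdlib Require Import Reals Lra.
From Coquelicot Require Import Coquelicot.
Open Scope R_scope.

(* For each real component w of f, the combination
     (C^2 (w/r^2)^2 - (L w)^2 + (1 + K) (L w + C w/r^2)^2 - K (w^#)^2) r^beta,
   with K = 2C/(beta-alpha-2)^2, is the exact derivative of an explicit quadratic form in
   (w, w') with coefficients rational in r (integration by parts of the cross terms).
   Since f is supported in some [a, b] with 0 < a, that form vanishes at a and b, so the
   four weighted L^2 integrals, each reduced to an integral over [a, b], satisfy the
   stated linear relation. *)


Definition supported_in (a b : R) (h : R -> R) : Prop :=
  forall r, 0 < r -> (r <= a \/ b <= r) -> h r = 0.

Lemma locally_outside (a b r : R) :
  0 < r -> r < a \/ b < r -> locally r (fun y => 0 < y /\ (y < a \/ b < y)).
Proof.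
  intros Hr [Hra | Hbr].
  - assert (He : 0 < Rmin r (a - r)) by (apply Rmin_glb_lt; lra).
    exists (mkposreal _ He); intros y Hy; simpl in Hy.
    apply Rabs_lt_between' in Hy.
    pose proof (Rmin_l r (a - r)); pose proof (Rmin_r r (a - r)); lra.
  - assert (He : 0 < Rmin r (r - b)) by (apply Rmin_glb_lt; lra).
    exists (mkposreal _ He); intros y Hy; simpl in Hy.
    apply Rabs_lt_between' in Hy.
    pose proof (Rmin_l r (r - b)); pose proof (Rmin_r r (r - b)); lra.
Qed.

Lemma Derive_n_vanishes_outside (u : R -> R) (a b : R) :
  (forall r, 0 < r -> (r < a \/ b < r) -> u r = 0) ->
  forall n r, 0 < r -> (r < a \/ b < r) -> Derive_n u n r = 0.
Proof.
  intros Hu n; induction n as [|n IH]; intros r Hr Hout.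
  - exact (Hu r Hr Hout).
  - simpl; rewrite (Derive_ext_loc _ (fun _ => 0)) by
      (apply (filter_imp _ _ (fun y Hy => IH y (proj1 Hy) (proj2 Hy)));
       exact (locally_outside a b r Hr Hout)).
    apply Derive_const.
Qed.

Lemma compact_support_pos_common (u v : R -> R) :
  compact_support_pos u -> compact_support_pos v ->
  exists a b, 0 < a /\ a < b /\
    (forall n, supported_in a b (Derive_n u n)) /\
    (forall n, supported_in a b (Derive_n v n)).
Proof.
  intros (au & bu & Hau & Habu & Hu) (av & bv & Hav & Habv & Hv).
  exists (Rmin au av / 2), (Rmax bu bv + 1).
  pose proof (Rmin_l au av); pose proof (Rmin_r au av).
  pose proof (Rmax_l bu bv); pose proof (Rmax_r bu bv).
  assert (0 < Rmin au av) by (apply Rmin_glb_lt; lra).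
  repeat split; try lra; intros n r Hr Hout.
  - apply (Derive_n_vanishes_outside u au bu Hu n r Hr); lra.
  - apply (Derive_n_vanishes_outside v av bv Hv n r Hr); lra.
Qed.

Lemma is_RInt_vanishing (h : R -> R) (x y : R) :
  (forall r, Rmin x y < r < Rmax x y -> h r = 0) -> is_RInt h x y 0.
Proof.
  intros Hh; apply (is_RInt_ext (fun _ => 0)).
  - intros r Hr; symmetry; exact (Hh r Hr).
  - pose proof (@is_RInt_const R_CompleteNormedModule x y 0) as H0.
    unfold scal in H0; simpl in H0; unfold mult in H0; simpl in H0.
    rewrite Rmult_0_r in H0; exact H0.
Qed.

Lemma is_RInt_gen_supported (h : R -> R) (a b : R) :
  0 < a -> a < b -> supported_in a b h ->
  (forall z, a <= z <= b -> continuous h z) ->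
  is_RInt_gen h (at_right 0) (Rbar_locally p_infty) (RInt h a b).
Proof.
  intros Ha Hab Hh Hc P [eps HP].
  assert (Hab_int : is_RInt h a b (RInt h a b)).
  { apply (RInt_correct h a b), ex_RInt_continuous; intros z Hz.
    rewrite Rmin_left, Rmax_right in Hz by lra; exact (Hc z Hz). }
  exists (fun x => 0 < x < a) (fun y => b < y).
  - exists (mkposreal a Ha); intros x Hx Hx0; simpl in Hx.
    apply Rabs_lt_between' in Hx; lra.
  - exists b; tauto.
  - intros x y Hx Hy; exists (RInt h a b); split; [ | apply HP, ball_center].
    simpl; replace (RInt h a b) with (plus 0 (plus (RInt h a b) 0))
      by (unfold plus; simpl; ring).
    apply (is_RInt_Chasles h x a y); [ | apply (is_RInt_Chasles h a b y); [exact Hab_int | ]];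
      apply is_RInt_vanishing; intros r Hr;
      rewrite Rmin_left, Rmax_right in Hr by lra; apply Hh; lra.
Qed.

Lemma is_RInt_gen_derive_supported (F f : R -> R) (a b : R) :
  0 < a -> a < b -> supported_in a b F -> supported_in a b f ->
  (forall z, a <= z <= b -> is_derive F z (f z)) ->
  (forall z, a <= z <= b -> continuous f z) ->
  is_RInt_gen f (at_right 0) (Rbar_locally p_infty) 0.
Proof.
  intros Ha Hab HF Hf HD Hc.
  assert (E : RInt f a b = 0).
  { rewrite (is_RInt_unique f a b (minus (F b) (F a))).
    - rewrite (HF a), (HF b) by lra; unfold minus, plus, opp; simpl; ring.
    - apply (is_RInt_derive F f); intros z Hz;
        rewrite Rmin_left, Rmax_right in Hz by lra; auto. }
  pose proof (is_RInt_gen_supported f a b Ha Hab Hf Hc) as I.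
  rewrite E in I; exact I.
Qed.

Lemma is_RInt_gen_lincomb_zero (Fa Fb : (R -> Prop) -> Prop)
  {FFa : ProperFilter' Fa} {FFb : ProperFilter' Fb}
  (f1 f2 f3 f4 : R -> R) (c1 c3 c4 l1 l2 l3 l4 : R) :
  is_RInt_gen f1 Fa Fb l1 -> is_RInt_gen f2 Fa Fb l2 ->
  is_RInt_gen f3 Fa Fb l3 -> is_RInt_gen f4 Fa Fb l4 ->
  is_RInt_gen (fun r => c1 * f1 r - f2 r + c3 * f3 r - c4 * f4 r) Fa Fb 0 ->
  c1 * l1 = l2 - c3 * l3 + c4 * l4.
Proof.
  intros I1 I2 I3 I4 I0.
  assert (I : is_RInt_gen (fun r => c1 * f1 r - f2 r + c3 * f3 r - c4 * f4 r) Fa Fb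
                (c1 * l1 - l2 + c3 * l3 - c4 * l4)).
  { exact (is_RInt_gen_minus _ _ _ _ (is_RInt_gen_plus _ _ _ _
      (is_RInt_gen_minus _ _ _ _ (is_RInt_gen_scal _ c1 _ I1) I2)
      (is_RInt_gen_scal _ c3 _ I3)) (is_RInt_gen_scal _ c4 _ I4)). }
  assert (E : c1 * l1 - l2 + c3 * l3 - c4 * l4 = 0).
  { rewrite <- (@is_RInt_gen_unique R_CompleteNormedModule _ _ _ _ _ _ I).
    exact (@is_RInt_gen_unique R_CompleteNormedModule _ _ _ _ _ _ I0). }
  lra.
Qed.

Definition L2_density (beta : R) (g1 g2 : R -> R) (r : R) : R :=
  (g1 r ^ 2 + g2 r ^ 2) * Rpower r beta.

Lemma is_RInt_gen_L2sq (beta : R) (g1 g2 : R -> R) (a b : R) :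
  0 < a -> a < b -> supported_in a b (L2_density beta g1 g2) ->
  (forall z, a <= z <= b -> continuous (L2_density beta g1 g2) z) ->
  is_RInt_gen (L2_density beta g1 g2) (at_right 0) (Rbar_locally p_infty)
    (L2sq beta g1 g2).
Proof.
  intros Ha Hab Hs Hc.
  pose proof (is_RInt_gen_supported _ a b Ha Hab Hs Hc) as I.
  replace (L2sq beta g1 g2) with (RInt (L2_density beta g1 g2) a b); [exact I | ].
  symmetry; exact (@is_RInt_gen_unique R_CompleteNormedModule _ _ _ _ _ _ I).
Qed.

Ltac derive_side_conditions :=
  repeat split; try assumption;
  apply Rgt_not_eq; repeat apply Rmult_lt_0_compat; lra.

Definition Kab (alpha beta : R) : R := 2 * Cab alpha beta / (beta - alpha - 2) ^ 2.

Definition boundary_form (alpha beta : R) (u : R -> R) (r : R) : R :=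
  let C := Cab alpha beta in
  let K := Kab alpha beta in
  let d := beta - alpha - 2 in
  Rpower r beta *
    (- (2 * C / d) * Derive u r ^ 2 / r
     + (2 * C * (1 + K) - K * (beta - 3) ^ 2 / 2) * Derive u r * u r / r ^ 2
     - C * (1 + K) * d * u r ^ 2 / r ^ 3).

Lemma is_derive_boundary_form (alpha beta : R) (u : R -> R) (r : R) :
  beta - alpha - 2 <> 0 -> 0 < r -> ex_derive u r -> ex_derive (Derive u) r ->
  is_derive (boundary_form alpha beta u) r
    ((Cab alpha beta ^ 2 * (u r / r ^ 2) ^ 2 - Lop alpha u r ^ 2
      + (1 + Kab alpha beta) * (Lop alpha u r + Cab alpha beta * (u r / r ^ 2)) ^ 2
      - Kab alpha beta * sharp beta u r ^ 2) * Rpower r beta).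
Proof.
  intros Hd Hr Hu0 Hu1.
  unfold boundary_form, Lop, sharp, Rpower; auto_derive.
  - derive_side_conditions.
  - change (Derive (fun x => Derive u x) r) with (Derive_n u 2 r).
    (* [field] rejects the jets in the form auto_derive leaves them; as named atoms they are fine. *)
    set (u0 := u r); set (u1 := Derive u r); set (u2 := Derive_n u 2 r).
    unfold Kab, Cab; field; split; lra.
Qed.

Lemma is_derive_boundary_form_sum (alpha beta : R) (u v : R -> R) (r : R) :
  beta - alpha - 2 <> 0 -> 0 < r ->
  ex_derive u r -> ex_derive (Derive u) r -> ex_derive v r -> ex_derive (Derive v) r ->
  let C := Cab alpha beta in
  let K := Kab alpha beta in
  is_derive (fun x => boundary_form alpha beta u x + boundary_form alpha beta v x) r
    (C ^ 2 * L2_density beta (fun x => u x / x ^ 2) (fun x => v x / x ^ 2) r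
     - L2_density beta (Lop alpha u) (Lop alpha v) r
     + (1 + K) * L2_density beta (fun x => Lop alpha u x + C * (u x / x ^ 2))
                                 (fun x => Lop alpha v x + C * (v x / x ^ 2)) r
     - K * L2_density beta (sharp beta u) (sharp beta v) r).
Proof.
  intros Hd Hr Hu0 Hu1 Hv0 Hv1 C K.
  pose proof (is_derive_plus _ _ _ _ _
    (is_derive_boundary_form alpha beta u r Hd Hr Hu0 Hu1)
    (is_derive_boundary_form alpha beta v r Hd Hr Hv0 Hv1)) as D.
  refine (eq_ind _ (is_derive _ r) D _ _).
  unfold plus, L2_density, C, K; simpl; ring.
Qed.

Lemma smooth_pos_jet2 (u : R -> R) (z : R) :
  smooth_pos u -> 0 < z ->
  ex_derive u z /\ ex_derive (Derive u) z /\ ex_derive (Derive_n u 2) z.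
Proof.
  intros Hu Hz; repeat split;
    [exact (Hu 0%nat z Hz) | exact (Hu 1%nat z Hz) | exact (Hu 2%nat z Hz)].
Qed.

Lemma supported_in_jet2 (a b : R) (u : R -> R) (r : R) :
  (forall n, supported_in a b (Derive_n u n)) -> 0 < r -> (r <= a \/ b <= r) ->
  u r = 0 /\ Derive u r = 0 /\ Derive_n u 2 r = 0.
Proof.
  intros Zu Hr Hout; repeat split;
    [exact (Zu 0%nat r Hr Hout) | exact (Zu 1%nat r Hr Hout) | exact (Zu 2%nat r Hr Hout)].
Qed.

Theorem theorem1p2 (alpha beta : R) (hab : beta - alpha - 2 <> 0)
  (u v : R -> R) (hf : Cc_inf_pos u v) :
  let C := Cab alpha beta in
  let K := 2 * C / (beta - alpha - 2) ^ 2 in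
  C ^ 2 * L2sq beta (fun r => u r / r ^ 2) (fun r => v r / r ^ 2)
  = L2sq beta (Lop alpha u) (Lop alpha v)
    - (1 + K) * L2sq beta (fun r => Lop alpha u r + C * (u r / r ^ 2))
                          (fun r => Lop alpha v r + C * (v r / r ^ 2))
    + K * L2sq beta (sharp beta u) (sharp beta v).
Proof.
  intros C K.
  destruct hf as (Hu & Su & Hv & Sv).
  destruct (compact_support_pos_common u v Su Sv) as (a & b & Ha & Hab & Zu & Zv).
  eapply (is_RInt_gen_lincomb_zero (at_right 0) (Rbar_locally p_infty));
    [ apply (is_RInt_gen_L2sq beta _ _ a b Ha Hab) ..
    | apply (is_RInt_gen_derive_supported
               (fun r => boundary_form alpha beta u r + boundary_form alpha beta v r)
               _ a b Ha Hab) ].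
  (* Every side condition is pointwise in the 2-jets of u and v. *)
  all: lazymatch goal with
  | |- supported_in _ _ _ =>
      intros r Hr Hout;
      destruct (supported_in_jet2 a b u r Zu Hr Hout) as (U0 & U1 & U2);
      destruct (supported_in_jet2 a b v r Zv Hr Hout) as (V0 & V1 & V2);
      unfold L2_density, boundary_form, Lop, sharp; cbv beta zeta;
      rewrite ?U0, ?U1, ?U2, ?V0, ?V1, ?V2; unfold Rdiv; ring
  | |- forall z, _ -> _ =>
      intros z Hz; assert (Hz0 : 0 < z) by lra;
      destruct (smooth_pos_jet2 u z Hu Hz0) as (Du0 & Du1 & Du2);
      destruct (smooth_pos_jet2 v z Hv Hz0) as (Dv0 & Dv1 & Dv2);
      lazymatch goal with
      | |- is_derive _ _ _ =>
          exact (is_derive_boundary_form_sum alpha beta u v z hab Hz0 Du0 Du1 Dv0 Dv1)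
      | |- continuous _ _ =>
          apply (@ex_derive_continuous R_AbsRing R_NormedModule);
          unfold L2_density, Lop, sharp, Rpower; auto_derive; derive_side_conditions
      end
  end.
Qed.
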